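(* Let $X$ be a metric space, $\mathcal M=\{M_1,\dots,M_n\}\subset\mathcal P^f_{\mathrm{Cl}}(X)$, $\Sigma(\mathcal M)\ne\emptyset$ and $d\in\Omega(\mathcal M)$. Then every compact $K\in\Sigma_d(\mathcal M)$ contains (as a subset) at least one element of $\Sigma_d(\mathcal M)$ that is minimal with respect to inclusion in $\Sigma_d(\mathcal M)$.
   Context: For a metric space $X$, $p\in X$, $A\subset X$: $|p\,A|=\inf_{a\in A}|p\,a|$ ($=\infty$ if $A=\emptyset$); for $0\le r<\infty$, $B_r(A)=\{p:|p\,A|\le r\}$. For nonempty $A,B$, $d_H(A,B)=\max\{\sup_{a\in A}|a\,B|,\sup_{b\in B}|b\,A|\}\in[0,\infty]$. $\mathcal P_{\mathrm{Cl}}(X)$ is the set of nonempty closed subsets of $X$ with $d_H$. A finiteness class of $\mathcal P_{\mathrm{Cl}}(X)$ is an equivalence class of the relation $A\sim B\iff d_H(A,B)<\infty$; $\mathcal P^f_{\mathrm{Cl}}(X)$ denotes a fixed finiteness class. For finite $\mathcal M=\{M_1,\dots,M_n\}\subset\mathcal P^f_{\mathrm{Cl}}(X)$, set $S_{\mathcal M}(Y)=\sum_{i=1}^n d_H(Y,M_i)$ for $Y\in\mathcal P^f_{\mathrm{Cl}}(X)$; $\Sigma(\mathcal M)$ is the set of all minimizers of $S_{\mathcal M}$ over $\mathcal P^f_{\mathrm{Cl}}(X)$. For $K\in\Sigma(\mathcal M)$, $d(K)=(d_H(K,M_1),\dots,d_H(K,M_n))$; $\Omega(\mathcal M)=\{d(K):K\in\Sigma(\mathcal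 M)\}$; for $d=(d_1,\dots,d_n)\in\Omega(\mathcal M)$, $\Sigma_d(\mathcal M)=\{K\in\Sigma(\mathcal M):d(K)=d\}$, partially ordered by inclusion. *)

From mathcomp Require Import all_boot all_order all_algebra.
From mathcomp Require Import all_classical all_reals ereal.
From Stdlib Require List.
Set Implicit Arguments. Unset Strict Implicit. Unset Printing Implicit Defensive.
Import Order.TTheory GRing.Theory Num.Theory.
Local Open Scope classical_set_scope.
Local Open Scope ring_scope.

Section MetricDefs.
Context {R : realType} {X : Type} (dist : X -> X -> R).

Definition is_metric : Prop :=
  [/\ forall x y, 0 <= dist x y,
      forall x y, dist x y = 0 <-> x = y,
      forall x y, dist x y = dist y x
    & forall x y z, dist x z <= dist x y + dist y z].

Definition mopen (U : set X) : Prop :=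
  forall x, U x -> exists2 e : R, 0 < e & forall y, dist x y < e -> U y.

Definition mclosed (A : set X) : Prop :=
  forall x, (forall e : R, 0 < e -> exists a, A a /\ dist x a < e) -> A x.

Definition mcompact (K : set X) : Prop :=
  forall (I : Type) (U : I -> set X), (forall i, mopen (U i)) ->
    K `<=` \bigcup_(i in setT) U i ->
    exists s : seq I, K `<=` (fun x => exists2 i, List.In i s & U i x).

(* |p A| = inf_{a in A} |p a|  (= +oo if A is empty) *)
Definition dist_pt_set (p : X) (A : set X) : \bar R :=
  ereal_inf [set (dist p a)%:E | a in A].

Definition hausdorff (A B : set X) : \bar R :=
  maxe (ereal_sup [set dist_pt_set a B | a in A])
       (ereal_sup [set dist_pt_set b A | b in B]).

Definition PCl (A : set X) : Prop := (exists a, A a) /\ mclosed A.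

(* the finiteness class of F (F itself in P_Cl(X)) *)
Definition in_class (F A : set X) : Prop :=
  PCl A /\ (hausdorff A F < +oo)%E.

Section Family.
Variables (F : set X) (n : nat) (M : 'I_n -> set X).

Definition S_M (Y : set X) : \bar R := (\sum_(i < n) hausdorff Y (M i))%E.

Definition Sigma (K : set X) : Prop :=
  in_class F K /\ forall Y, in_class F Y -> (S_M K <= S_M Y)%E.

Definition dvec (K : set X) : 'I_n -> \bar R := fun i => hausdorff K (M i).

Definition Omega (d : 'I_n -> \bar R) : Prop := exists2 K, Sigma K & dvec K = d.

Definition Sigma_d (d : 'I_n -> \bar R) (K : set X) : Prop :=
  Sigma K /\ dvec K = d.

Definition minimal_in_Sigma_d (d : 'I_n -> \bar R) (K0 : set X) : Prop :=
  Sigma_d d K0 /\ forall K', Sigma_d d K' -> K' `<=` K0 -> K' = K0.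
End Family.
End MetricDefs.

From mathcomp Require Import all_boot all_order all_algebra.
From mathcomp Require Import all_classical all_reals ereal.
Import Order.TTheory GRing.Theory Num.Theory.
Local Open Scope classical_set_scope.
Local Open Scope ring_scope.

(* By Zorn's lemma for reverse inclusion it suffices that the intersection
   K' of a nonempty chain of elements of Sigma_d contained in K is again in
   Sigma_d.  Its members are nonempty closed subsets of the compact K, and
   any chain of such sets has nonempty intersection (finite intersection
   property).  Applied to the chain itself this makes K' nonempty; applied
   to the traces of the chain on closed balls around points of M_i it gives
   d_H(K', M_i) <= d_i.  Being a bounded subset of K, K' lies in the
   finiteness class, so S_M(K') <= S_M(K) = min S_M; as every d_i is
   finite, all the inequalities d_H(K', M_i) <= d_i are equalities. *)

Lemma fin_num_sum_eq (R : realDomainType) (I : finType) (f g : I -> \bar R) :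
  (forall i, f i \is a fin_num) -> (forall i, g i \is a fin_num) ->
  (forall i, (f i <= g i)%E) -> (\sum_i g i <= \sum_i f i)%E -> f = g.
Proof.
move=> /(_ _)/fineK ef /(_ _)/fineK eg fg.
under eq_bigr do rewrite -eg; under [X in (_ <= X)%E]eq_bigr do rewrite -ef.
rewrite !sumEFin lee_fin => gf; apply: funext => i; rewrite -ef -eg.
have fgr j : fine (f j) <= fine (g j) by rewrite -lee_fin ef eg.
have [le_fg] := leif_sum (P := predT) (fun j _ => leif_eq (fgr j)).
by rewrite eq_le le_fg gf => /esym/forallP/(_ i)/eqP ->.
Qed.

Section Hausdorff.
Context {R : realType} {X : Type} {dist : X -> X -> R}.
Hypothesis dist_metric : is_metric dist.

Let dist_ge0 x y : 0 <= dist x y. Proof. by case: dist_metric. Qed.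
Let distC x y : dist x y = dist y x. Proof. by case: dist_metric. Qed.
Let dist_triangle x y z : dist x z <= dist x y + dist y z.
Proof. by case: dist_metric. Qed.

Lemma dist_pt_set_le p {A : set X} {a} :
  A a -> (dist_pt_set dist p A <= (dist p a)%:E)%E.
Proof. by move=> Aa; apply: ereal_inf_lbound; exists a. Qed.

Lemma dist_pt_set_ge0 p (A : set X) : (0 <= dist_pt_set dist p A)%E.
Proof. by apply: le_ereal_inf_tmp => _ [a _ <-]; rewrite lee_fin. Qed.

Lemma dist_pt_set_lt p (A : set X) r :
  (dist_pt_set dist p A < r%:E)%E -> exists2 a, A a & dist p a < r.
Proof. by move=> /ereal_inf_lt[_ [a Aa <-]]; rewrite lte_fin; exists a. Qed.

Lemma dist_pt_set_le_hausdorffl {A} (B : set X) {a} :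
  A a -> (dist_pt_set dist a B <= hausdorff dist A B)%E.
Proof. by move=> Aa; rewrite le_max ereal_sup_ubound //; exists a. Qed.

Lemma hausdorffC (A B : set X) : hausdorff dist A B = hausdorff dist B A.
Proof. by rewrite /hausdorff maxC. Qed.

Lemma dist_pt_set_le_hausdorffr (A : set X) {B b} :
  B b -> (dist_pt_set dist b A <= hausdorff dist A B)%E.
Proof. by rewrite hausdorffC; apply: dist_pt_set_le_hausdorffl. Qed.

Lemma hausdorff_le (A B : set X) h :
  (forall a, A a -> (dist_pt_set dist a B <= h)%E) ->
  (forall b, B b -> (dist_pt_set dist b A <= h)%E) ->
  (hausdorff dist A B <= h)%E.
Proof.
by move=> hA hB; rewrite ge_max; apply/andP; split;
  apply: ge_ereal_sup => _ [x Hx <-]; auto.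
Qed.

Lemma hausdorff_ge0 {A} (B : set X) {a} : A a -> (0 <= hausdorff dist A B)%E.
Proof.
move=> Aa; apply: le_trans (dist_pt_set_le_hausdorffl B Aa).
exact: dist_pt_set_ge0.
Qed.

Lemma dist_pt_set_triangle p y (Z : set X) :
  (dist_pt_set dist p Z <= (dist p y)%:E + dist_pt_set dist y Z)%E.
Proof.
apply/lee_addgt0Pr => e e0.
case E: (dist_pt_set dist y Z) => [r| |]; last 2 first.
- by rewrite addey // leey.
- by have := dist_pt_set_ge0 y Z; rewrite E.
have /dist_pt_set_lt[z Zz yz] : (dist_pt_set dist y Z < (r + e)%:E)%E.
  by rewrite E lte_fin ltrDl.
apply: le_trans (dist_pt_set_le p Zz) _.
rewrite -!EFinD lee_fin -addrA; apply: le_trans (dist_triangle p y z) _.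
by rewrite lerD2l ltW.
Qed.

Lemma dist_pt_set_le_hausdorffD p {Y} (Z : set X) {y0} : Y y0 ->
  (dist_pt_set dist p Z <= dist_pt_set dist p Y + hausdorff dist Y Z)%E.
Proof.
move=> Yy0; have hYZ0 := hausdorff_ge0 Z Yy0.
apply/lee_addgt0Pr => e e0.
case E: (dist_pt_set dist p Y) => [r| |]; last 2 first.
- by rewrite addye ?leey // gt_eqF // (lt_le_trans _ hYZ0) ?ltNy0.
- by have := dist_pt_set_ge0 p Y; rewrite E.
have /dist_pt_set_lt[y Yy py] : (dist_pt_set dist p Y < (r + e)%:E)%E.
  by rewrite E lte_fin ltrDl.
rewrite -addeA (addeC _ e%:E) addeA -EFinD.
apply: le_trans (dist_pt_set_triangle p y Z) _.
by apply: leeD; [rewrite lee_fin ltW | apply: dist_pt_set_le_hausdorffl].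
Qed.

Lemma hausdorff_triangle (A : set X) {B} (C : set X) {b0} : B b0 ->
  (hausdorff dist A C <= hausdorff dist A B + hausdorff dist B C)%E.
Proof.
move=> Bb0; apply: hausdorff_le => [a Aa|c Cc].
  apply: le_trans (dist_pt_set_le_hausdorffD a C Bb0) _.
  by apply: leeD => //; apply: dist_pt_set_le_hausdorffl.
rewrite addeC [hausdorff dist A B]hausdorffC.
apply: le_trans (dist_pt_set_le_hausdorffD c A Bb0) _.
by apply: leeD => //; apply: dist_pt_set_le_hausdorffr.
Qed.

Lemma hausdorff_le_bound {A B : set X} {a0 b0} r : A a0 -> B b0 ->
  (forall a b, A a -> B b -> dist a b <= r) -> (hausdorff dist A B <= r%:E)%E.
Proof.
move=> Aa0 Bb0 hr; apply: hausdorff_le => [a Aa|b Bb].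
  by apply: le_trans (dist_pt_set_le a Bb0) _; rewrite lee_fin hr.
by apply: le_trans (dist_pt_set_le b Aa0) _; rewrite lee_fin distC hr.
Qed.

Lemma in_class_hausdorff_lt_pinfty (F A B : set X) : PCl dist F ->
  in_class dist F A -> in_class dist F B -> (hausdorff dist A B < +oo)%E.
Proof.
move=> [[f Ff] _] [_ AF] [_ BF].
apply: le_lt_trans (hausdorff_triangle A B Ff) _.
by rewrite lte_add_pinfty // hausdorffC.
Qed.

End Hausdorff.

Lemma total_on_seq_lbound {T I : Type} (C : set (set T)) (f : I -> set T)
    (s : seq I) (A1 : set T) :
  C A1 -> total_on C subset -> (forall i, C (f i)) ->
  exists2 A0, C A0 & forall i, List.In i s -> A0 `<=` f i.
Proof.
move=> CA1 Ctot Cf; elim: s => [|i s [A0 CA0 A0s]]; first by exists A1.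
have [A0fi|fiA0] := Ctot _ _ CA0 (Cf i).
  by exists A0 => // j /= [<-|/A0s].
exists (f i) => // j /= [<-//|/A0s]; exact: subset_trans fiA0.
Qed.

Lemma seq_has_ubound {R : realDomainType} (s : seq R) :
  exists B, forall r, List.In r s -> r <= B.
Proof.
elim: s => [|a s [B sB]]; first by exists 0.
exists (Num.max a B) => r /= [<-|/sB rB]; first by rewrite le_max lexx.
by rewrite le_max rB orbT.
Qed.

Definition mclosed_chain {R : realType} {X : Type} (dist : X -> X -> R)
    (K : set X) (C : set (set X)) : Prop :=
  [/\ C !=set0, forall A, C A -> [/\ A `<=` K, mclosed dist A & A !=set0]
    & total_on C subset].

Section MetricCompactness.
Context {R : realType} {X : Type} {dist : X -> X -> R}.
Hypothesis dist_metric : is_metric dist.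

Let distC x y : dist x y = dist y x. Proof. by case: dist_metric. Qed.
Let dist_triangle x y z : dist x z <= dist x y + dist y z.
Proof. by case: dist_metric. Qed.

Lemma mopen_ball x (r : R) : mopen dist (fun y => dist x y < r).
Proof.
move=> y xy; exists (r - dist x y); first by rewrite subr_gt0.
by move=> z yz; apply: le_lt_trans (dist_triangle x y z) _; rewrite -ltrBrDl.
Qed.

Lemma mclosed_closed_ball x (r : R) : mclosed dist (fun y => dist x y <= r).
Proof.
move=> y yA; apply/ler_addgt0Pr => e e0.
have [a [xa ya]] := yA e e0.
by apply: le_trans (dist_triangle x a y) _; rewrite lerD // distC ltW.
Qed.

Lemma mclosed_setI (A B : set X) :
  mclosed dist A -> mclosed dist B -> mclosed dist (A `&` B).
Proof.
move=> clA clB x xAB; split; [apply: clA | apply: clB] => e e0;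
  by have [a [[Aa Ba] xa]] := xAB e e0; exists a.
Qed.

Lemma mclosed_bigcap (C : set (set X)) :
  (forall A, C A -> mclosed dist A) -> mclosed dist (\bigcap_(A in C) A).
Proof.
move=> clC x xC A CA; apply: clC => // e e0.
by have [a [Ca xa]] := xC e e0; exists a; split => //; apply: Ca.
Qed.

Lemma mclosed_openC (A : set X) : mclosed dist A -> mopen dist (~` A).
Proof.
move=> clA x nAx.
have [e e0 eA] : exists2 e : R, 0 < e & forall a, A a -> e <= dist x a.
  apply: contrapT => noe; apply: nAx; apply: clA => e e0.
  apply: contrapT => /forallNP hn; apply: noe; exists e => // a Aa.
  by rewrite leNgt; apply/negP => ae; apply: (hn a).
by exists e => // y xy Ay; have := eA y Ay; rewrite leNgt xy.
Qed.

Lemma mcompact_bounded (K : set X) : mcompact dist K ->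
  exists B, forall x y, K x -> K y -> dist x y <= B.
Proof.
move=> cK; have [[x0 Kx0]|K0] := pselect (K !=set0); last first.
  by exists 0 => x y Kx; exfalso; apply: K0; exists x.
have [|s Ks] := cK R (fun r y => dist x0 y < r) (mopen_ball x0).
  by move=> y Ky; exists (dist x0 y + 1) => //=; rewrite ltrDl.
have [B sB] := seq_has_ubound s.
have x0B y : K y -> dist x0 y <= B.
  by move=> /Ks[r /sB rB x0y]; exact: ltW (lt_le_trans x0y rB).
exists (B + B) => x y Kx Ky; apply: le_trans (dist_triangle x x0 y) _.
by rewrite distC lerD ?x0B.
Qed.

Lemma mcompact_bigcap_chain_neq0 {K : set X} {C : set (set X)} :
  mcompact dist K -> mclosed_chain dist K C -> \bigcap_(A in C) A !=set0.
Proof.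
move=> cK [[A1 CA1] C_closed C_total]; apply: contrapT => /forallNP C0.
pose U (i : {A | C A}) := ~` sval i.
have U_open i : mopen dist (U i).
  by apply: mclosed_openC; have [] := C_closed _ (svalP i).
have [|s Ks] := cK _ _ U_open.
  move=> x _; have /existsNP[A /not_implyP[CA nAx]] := C0 x.
  by exists (exist _ A CA).
have [A0 CA0 A0s] := total_on_seq_lbound _ _ s _ CA1 C_total (@svalP _ _).
have [A0K _ [x A0x]] := C_closed _ CA0.
by have [i si] := Ks x (A0K x A0x); apply; apply: A0s.
Qed.

Lemma mclosed_chain_setI {K D : set X} {C : set (set X)} :
  mclosed_chain dist K C -> mclosed dist D ->
  (forall A, C A -> A `&` D !=set0) ->
  mclosed_chain dist K [set A `&` D | A in C].
Proof.
move=> [[A1 CA1] C_closed C_total] clD CD; split.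
- by exists (A1 `&` D), A1.
- move=> _ [A CA <-]; have [AK clA _] := C_closed _ CA; split; last exact: CD.
  + by move=> x [Ax _]; apply: AK.
  + exact: mclosed_setI.
- move=> _ _ [A CA <-] [B CB <-].
  by have [AB|BA] := C_total _ _ CA CB; [left|right]; apply: setSI.
Qed.

Lemma hausdorff_bigcap_chain_le {K B : set X} {C : set (set X)} {h} :
  mcompact dist K -> mclosed_chain dist K C ->
  (forall A, C A -> (hausdorff dist A B <= h)%E) ->
  (hausdorff dist (\bigcap_(A in C) A) B <= h)%E.
Proof.
move=> cK Cchain CB; have [[A1 CA1] C_closed _] := Cchain.
have [_ _ [a1 A1a1]] := C_closed _ CA1.
apply: hausdorff_le => [a Ca|b Bb].
  exact: le_trans (dist_pt_set_le_hausdorffl B (Ca _ CA1)) (CB _ CA1).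
case Eh: h => [r| |]; last 2 first.
- exact: leey.
- by have := le_trans (hausdorff_ge0 dist_metric B A1a1) (CB _ CA1); rewrite Eh.
apply/lee_addgt0Pr => e e0; rewrite -EFinD.
pose ball y := dist b y <= r + e.
have C_ball A : C A -> A `&` ball !=set0.
  move=> CA; have : (dist_pt_set dist b A < (r + e)%:E)%E.
    apply: le_lt_trans (dist_pt_set_le_hausdorffr A Bb) _.
    by apply: le_lt_trans (CB _ CA) _; rewrite Eh lte_fin ltrDl.
  by move=> /(dist_pt_set_lt b A)[a Aa ba]; exists a; split => //; apply: ltW.
have [x Cx] := mcompact_bigcap_chain_neq0 cK
  (mclosed_chain_setI Cchain (mclosed_closed_ball b (r + e)) C_ball).
have Cx' : (\bigcap_(A in C) A) x.
  by move=> A CA; exact: (Cx _ (imageP _ CA)).1.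
have [_ bx] := Cx _ (imageP _ CA1).
by apply: le_trans (dist_pt_set_le b Cx') _; rewrite lee_fin.
Qed.

End MetricCompactness.

Section Minimizers.
Context {R : realType} {X : Type} {dist : X -> X -> R}.
Hypothesis dist_metric : is_metric dist.
Context {F : set X} {n : nat} {M : 'I_n -> set X}.
Hypotheses (F_PCl : PCl dist F) (M_class : forall i, in_class dist F (M i)).

Lemma Sigma_d_fin_num {d K} i : Sigma_d dist F M d K -> d i \is a fin_num.
Proof.
move=> [[Kcl _] <-]; have [[[k Kk] _] _] := Kcl.
rewrite ge0_fin_numE; last exact: (hausdorff_ge0 dist_metric (M i) Kk).
exact: in_class_hausdorff_lt_pinfty F_PCl Kcl (M_class i).
Qed.

Lemma Sigma_d_of_le {d K} K' : Sigma_d dist F M d K -> in_class dist F K' ->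
  (forall i, (hausdorff dist K' (M i) <= d i)%E) -> Sigma_d dist F M d K'.
Proof.
move=> Kd K'cl K'd; have [[Kcl Kmin] dK] := Kd.
have [[k' K'k'] _] := K'cl.1.
have finK i : dvec dist M K i \is a fin_num.
  by rewrite dK; exact: Sigma_d_fin_num i Kd.
have K'K i : (dvec dist M K' i <= dvec dist M K i)%E.
  by rewrite dK; exact: K'd.
have dK' : dvec dist M K' = d.
  rewrite -dK; apply: fin_num_sum_eq => // [i|]; last exact: Kmin.
  rewrite ge0_fin_numE; last exact: (hausdorff_ge0 dist_metric (M i) K'k').
  by apply: le_lt_trans (K'K i) _; rewrite ltey_eq finK.
split=> //; split=> // Y /Kmin; congr (_ <= _)%E.
by apply: eq_bigr => i _; rewrite -/(dvec dist M K' i) dK' -dK.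
Qed.

Lemma Sigma_d_bigcap_chain {d K} {C : set (set X)} :
  mcompact dist K -> Sigma_d dist F M d K -> C !=set0 ->
  (forall A, C A -> A `<=` K /\ Sigma_d dist F M d A) -> total_on C subset ->
  Sigma_d dist F M d (\bigcap_(A in C) A).
Proof.
move=> cK Kd [A1 CA1] CK Ctot.
have Cchain : mclosed_chain dist K C.
  split=> // [|A /CK[AK [[[[A_neq0 clA] _] _] _]]]; first by exists A1.
  by split.
have [x Cx] := mcompact_bigcap_chain_neq0 cK Cchain.
have CsubK : \bigcap_(A in C) A `<=` K by move=> y /(_ _ CA1)/(CK _ CA1).1.
have [[Kcl _] _] := Kd.
apply: (Sigma_d_of_le _ Kd) => [|i]; last first.
  apply: (hausdorff_bigcap_chain_le dist_metric cK Cchain) => A /CK[_ [_ <-]].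
  exact: lexx.
split.
  split; first by exists x.
  by apply: mclosed_bigcap => A /CK[_ [[[[_ clA] _] _] _]].
apply: le_lt_trans (hausdorff_triangle dist_metric _ F (CsubK x Cx)) _.
rewrite lte_add_pinfty //; last by case: Kcl.
have [B KB] := mcompact_bounded dist_metric K cK.
apply: le_lt_trans (ltry B).
apply: (hausdorff_le_bound dist_metric B Cx (CsubK x Cx)) => a b /CsubK Ka Kb.
exact: KB.
Qed.

End Minimizers.

Lemma Zorn_bigcap {T : Type} {P : set (set T)} : P !=set0 ->
  (forall C, C `<=` P -> C !=set0 -> total_on C subset ->
    P (\bigcap_(A in C) A)) ->
  exists2 A, P A & forall B, P B -> B `<=` A -> B = A.
Proof.
move=> [A0 PA0] Pchain.
pose supset (s t : {A | P A}) := `[< sval t `<=` sval s >].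
have [t tmin] : exists t, forall s, supset t s -> s = t.
  apply: Zorn.
  - by move=> s; apply/asboolP.
  - move=> r s u /asboolP sr /asboolP us; apply/asboolP.
    exact: subset_trans us sr.
  - by move=> [A PA] [B PB] /asboolP BA /asboolP AB; apply/eq_exist/seteqP.
  move=> Ch Chtot; have [[s Chs]|Ch0] := pselect (Ch !=set0); last first.
    by exists (exist _ A0 PA0) => s Chs; exfalso; apply: Ch0; exists s.
  have PC : P (\bigcap_(A in [set sval s | s in Ch]) A).
    apply: Pchain; first by move=> _ [u _ <-]; exact: svalP.
      by exists (sval s), s.
    move=> _ _ [u Chu <-] [v Chv <-].
    by have [/asboolP|/asboolP] := Chtot _ _ Chu Chv; [right|left].
  by exists (exist _ _ PC) => u Chu; apply/asboolP => x /(_ _ (imageP _ Chu)).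
exists (sval t) => [|B PB Bt]; first exact: svalP.
by have /(congr1 sval) := tmin (exist _ B PB) (asboolT Bt).
Qed.

Theorem mainTheorem12 (R : realType) (X : Type) (dist : X -> X -> R)
  (Hmetric : is_metric dist)
  (F : set X) (HF : PCl dist F)
  (n : nat) (M : 'I_n -> set X) (HM : forall i, in_class dist F (M i))
  (HSigma : exists K, Sigma dist F M K)
  (d : 'I_n -> \bar R) (Hd : Omega dist F M d)
  (K : set X) (HKc : mcompact dist K) (HK : Sigma_d dist F M d K) :
  exists K0 : set X, K0 `<=` K /\ minimal_in_Sigma_d dist F M d K0.
Proof.
(* [HSigma] and [Hd] are consequences of [HK]. *)
pose P A := A `<=` K /\ Sigma_d dist F M d A.
have P_chain C : C `<=` P -> C !=set0 -> total_on C subset ->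
    P (\bigcap_(A in C) A).
  move=> CP C_neq0 Ctot; split.
    by have [A1 CA1] := C_neq0; move=> x /(_ _ CA1); apply: (CP _ CA1).1.
  exact: (Sigma_d_bigcap_chain Hmetric HF HM HKc HK C_neq0 CP Ctot).
have P_neq0 : P !=set0 by exists K; split.
have [K0 [K0K K0d] K0min] := Zorn_bigcap P_neq0 P_chain.
exists K0; split=> //; split=> // K' K'd K'K0.
by apply: K0min => //; split=> //; exact: subset_trans K'K0 K0K.
Qed.
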